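(* Let $A,B\in\mathrm{SL}_2\mathbb{Z}$ be noncommuting, well oriented, with $2\le\mathrm{tr}(A)<\mathrm{tr}(B)$ and $\mathrm{tr}(AB)>\mathrm{tr}(B^2)$. Then the integers $\mathrm{tr}((AB)^3)$ and $\mathrm{tr}((AB^2)^2)$ differ by at least $2$.
   Context: Fixed points are for the Möbius action on $\partial\mathcal{H}=\mathbb{P}^1\mathbb{R}$; $\alpha^\pm$ ($\beta^\pm$) are the attracting/repelling fixed points of $A$ ($B$), both equal to the unique fixed point if parabolic. With $\partial\mathcal{H}$ cyclically ordered and $[\alpha,\beta]$ the closed counterclockwise interval from $\alpha$ to $\beta$, let $I^+=\{\alpha^+\}$ if $\alpha^+=\beta^+$, and otherwise the one of $[\alpha^+,\beta^+],[\beta^+,\alpha^+]$ mapped into itself by both $A$ and $B$ (if it exists); define $I^-$ likewise with $A^{-1},B^{-1},\alpha^-,\beta^-$. The pair is coherently oriented if both exist, and well oriented if $A,B$ is coherently oriented but $A,B^{-1}$ is not. *)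

From HB Require Import structures.
From mathcomp Require Import all_boot all_order all_algebra.
From Stdlib Require Import Rdefinitions.
From mathcomp Require Import Rstruct.

Set Implicit Arguments.
Unset Strict Implicit.
Unset Printing Implicit Defensive.

Import Order.TTheory GRing.Theory Num.Theory.
Local Open Scope ring_scope.

Definition SL2Z (M : 'M[int]_2) : Prop := \det M = 1.

(* The boundary of the upper half plane, P^1(R) = R u {oo}:
   [Some x] is the real point x, [None] is the point at infinity. *)
Definition P1R := option R.

Definition ma (M : 'M[int]_2) : R := (M 0 0)%:~R.
Definition mb (M : 'M[int]_2) : R := (M 0 1)%:~R.
Definition mc (M : 'M[int]_2) : R := (M 1 0)%:~R.
Definition md (M : 'M[int]_2) : R := (M 1 1)%:~R.

Definition hom (p : P1R) : R * R :=
  match p with Some x => (x, 1) | None => (1, 0) end.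

Definition moebius (M : 'M[int]_2) (p : P1R) : P1R :=
  let: (x, y) := hom p in
  let x' := ma M * x + mb M * y in
  let y' := mc M * x + md M * y in
  if y' == 0 then None else Some (x' / y').

Definition fixed_with (M : 'M[int]_2) (p : P1R) (l : R) : Prop :=
  let: (x, y) := hom p in
  ma M * x + mb M * y = l * x /\ mc M * x + md M * y = l * y.

Definition fixed_point (M : 'M[int]_2) (p : P1R) : Prop :=
  moebius M p = p.

(* Attracting fixed point: a fixed point whose eigenvalue has maximal
   absolute value among the eigenvalues of all fixed points (for a
   parabolic element the unique fixed point is both attracting and
   repelling). *)
Definition attracting_fp (M : 'M[int]_2) (p : P1R) : Prop :=
  fixed_point M p /\
  exists l, fixed_with M p l /\ forall q m, fixed_with M q m -> `|m| <= `|l|.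

Definition repelling_fp (M : 'M[int]_2) (p : P1R) : Prop :=
  fixed_point M p /\
  exists l, fixed_with M p l /\ forall q m, fixed_with M q m -> `|l| <= `|m|.

(* The closed counterclockwise interval [a, b] of P^1(R) = boundary of H
   (counterclockwise = increasing direction on R, then through oo). *)
Definition ccw_interval (a b : P1R) (p : P1R) : bool :=
  match a, b with
  | Some x, Some y =>
      if x <= y then (match p with Some z => x <= z <= y | None => false end)
      else (match p with Some z => (x <= z) || (z <= y) | None => true end)
  | Some x, None => match p with Some z => x <= z | None => true end
  | None, Some y => match p with Some z => z <= y | None => true end
  | None, None => p == None
  end.

Definition maps_into_itself (M : 'M[int]_2) (I : P1R -> bool) : Prop :=
  forall p, I p -> I (moebius M p).

Definition I_plus_exists (A B : 'M[int]_2) : Prop :=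
  exists ap bp, attracting_fp A ap /\ attracting_fp B bp /\
    (ap = bp \/
     (ap <> bp /\
      ((maps_into_itself A (ccw_interval ap bp) /\
        maps_into_itself B (ccw_interval ap bp)) \/
       (maps_into_itself A (ccw_interval bp ap) /\
        maps_into_itself B (ccw_interval bp ap))))).

Definition I_minus_exists (A B : 'M[int]_2) : Prop :=
  exists am bm, repelling_fp A am /\ repelling_fp B bm /\
    (am = bm \/
     (am <> bm /\
      ((maps_into_itself (invmx A) (ccw_interval am bm) /\
        maps_into_itself (invmx B) (ccw_interval am bm)) \/
       (maps_into_itself (invmx A) (ccw_interval bm am) /\
        maps_into_itself (invmx B) (ccw_interval bm am))))).

Definition coherently_oriented (A B : 'M[int]_2) : Prop :=
  I_plus_exists A B /\ I_minus_exists A B.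

Definition well_oriented (A B : 'M[int]_2) : Prop :=
  coherently_oriented A B /\ ~ coherently_oriented A (invmx B).

(* Cayley-Hamilton for 2x2 matrices (N^2 = tr N * N - det N) turns the traces of
   the two words into polynomials in a = tr A, b = tr B and t = tr AB:
   tr ((AB)^3) = t^3 - 3t and tr ((AB^2)^2) = (tb - a)^2 - 2.  The hypothesis
   tr (B^2) < tr (AB) says t >= b^2 - 1.  For t >= b^2 the cubic term dominates
   and the difference is at least b^2 + 2 - a^2 >= 2; at t = b^2 - 1 the
   difference is (b^2 - 1) k + 2 - a^2 with k = b (2a - b) - 2, and k can be
   neither 0 nor -1 because b >= 3 cannot divide 2 or 1. *)

From HB Require Import structures.
From mathcomp Require Import all_boot all_order all_algebra.
From mathcomp Require Import ring zify.

Import Order.TTheory GRing.Theory Num.Theory.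
Local Open Scope ring_scope.

Section Trace2.

Variable R : comNzRingType.
Implicit Types M N : 'M[R]_2.

Lemma char_poly2 M : char_poly M = 'X^2 - (\tr M)%:P * 'X + (\det M)%:P.
Proof.
apply/polyP => i; rewrite coefD coefB coefXn coefCM coefX coefC.
case: i => [|[|[|i]]] /=; rewrite ?mulr0 ?mulr1 ?oppr0 ?subr0 ?addr0 ?add0r.
- by rewrite char_poly_det sqrrN expr1n mul1r.
- exact: (char_poly_trace M isT).
- by move/monicP: (char_poly_monic M); rewrite lead_coefE size_char_poly.
- by rewrite nth_default // size_char_poly.
Qed.

Lemma mx2_Cayley_Hamilton M : M ^+ 2 = \tr M *: M - (\det M)%:M.
Proof.
have := Cayley_Hamilton M; rewrite char_poly2 !rmorphD rmorphN !rmorphM /=.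
rewrite !horner_mx_C horner_mx_X -mulmxE mul_scalar_mx expr2 -mulmxE.
by move/eqP; rewrite addr_eq0 subr_eq => /eqP ->; rewrite addrC.
Qed.

Lemma mxtrace_mul_sqr2 M N : \tr (M *m N ^+ 2) = \tr (M *m N) * \tr N - \tr M * \det N.
Proof.
rewrite mx2_Cayley_Hamilton mulmxBr mul_mx_scalar -scalemxAr raddfB /= !mxtraceZ.
by rewrite mulrC [\det N * _]mulrC.
Qed.

Lemma mxtrace_sqr2 M : \tr (M ^+ 2) = \tr M ^+ 2 - 2 * \det M.
Proof.
rewrite mx2_Cayley_Hamilton raddfB /= mxtraceZ mxtrace_scalar.
by rewrite expr2 mulr_natl.
Qed.

Lemma mxtrace_cube2 M : \tr (M ^+ 3) = \tr M ^+ 3 - 3 * \tr M * \det M.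
Proof.
rewrite exprS -mulmxE mxtrace_mul_sqr2 mulmxE -expr2 mxtrace_sqr2.
ring.
Qed.

End Trace2.

(* [trace_gap (tr A) (tr B) (tr AB)] is tr ((AB)^3) - tr ((AB^2)^2) for A, B in SL_2. *)
Definition trace_gap (a b t : int) : int := t ^+ 3 - 3 * t - ((t * b - a) ^+ 2 - 2).

Lemma trace_gap_ge2 (a b t : int) : 2 <= a < b -> b ^+ 2 <= t -> 2 <= trace_gap a b t.
Proof.
move=> /andP[a_ge2 a_lt_b] b2_le_t.
have -> : trace_gap a b t = t ^+ 2 * (t - b ^+ 2) + (2 * a * b - 3) * t + 2 - a ^+ 2.
  by rewrite /trace_gap; ring.
have : 0 <= t ^+ 2 * (t - b ^+ 2) by rewrite mulr_ge0 ?sqr_ge0 ?subr_ge0.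
have : b ^+ 2 <= (2 * a * b - 3) * t.
  by rewrite -[b ^+ 2]mul1r ler_pM ?sqr_ge0 //; nia.
have : a ^+ 2 < b ^+ 2 by nia.
lia.
Qed.

Lemma abs_trace_gap_sqr_sub1_ge2 (a b : int) : 2 <= a < b -> 2 <= `|trace_gap a b (b ^+ 2 - 1)|.
Proof.
move=> /andP[a_ge2 a_lt_b].
set k := b * (2 * a - b) - 2.
have -> : trace_gap a b (b ^+ 2 - 1) = (b ^+ 2 - 1) * k + 2 - a ^+ 2.
  by rewrite /trace_gap /k; ring.
have b2_gt1 : 1 < b ^+ 2 - 1 by nia.
have [k_pos | k_neg] : 1 <= k \/ k <= -2.
  have [h|h] := lerP 1 (2 * a - b); [left | right]; rewrite /k; nia.
- rewrite ger0_norm; nia.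
- rewrite ler0_norm; nia.
Qed.

Lemma abs_trace_gap_ge2 (a b t : int) :
  2 <= a < b -> b ^+ 2 - 2 < t -> 2 <= `|trace_gap a b t|.
Proof.
move=> ab t_gt; have [-> | t_ge] : t = b ^+ 2 - 1 \/ b ^+ 2 <= t by lia.
- exact: abs_trace_gap_sqr_sub1_ge2.
- by have gap_ge2 := trace_gap_ge2 _ _ _ ab t_ge; rewrite ger0_norm; lia.
Qed.

Theorem lemma7p1 (A B : 'M[int]_2) :
  SL2Z A -> SL2Z B ->
  A *m B != B *m A ->
  well_oriented A B ->
  2 <= \tr A -> \tr A < \tr B ->
  \tr (B *m B) < \tr (A *m B) ->
  2 <= `| \tr ((A *m B) ^+ 3) - \tr ((A *m B *m B) ^+ 2) |.
Proof.
rewrite /SL2Z => detA detB _ _ trA_ge2 trA_lt_trB trBB_lt_trAB.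
have detAB : \det (A *m B) = 1 by rewrite det_mulmx detA detB mulr1.
have detABB : \det (A *m B *m B) = 1 by rewrite det_mulmx detAB detB mulr1.
have sqrB : B *m B = B ^+ 2 by rewrite expr2 mulmxE.
rewrite sqrB mxtrace_sqr2 detB mulr1 in trBB_lt_trAB.
rewrite mxtrace_cube2 mxtrace_sqr2 detAB detABB -[A *m B *m B]mulmxA sqrB.
rewrite mxtrace_mul_sqr2 detB !mulr1.
by apply: abs_trace_gap_ge2; rewrite ?trA_ge2 ?trA_lt_trB.
Qed.
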